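(* If $(A,\pi_A)$, $(B,\pi_B)$, $(C,\pi_C)$ are signed graphs such that $(A,\pi_A)\,\square\,(B,\pi_B)\equiv(A,\pi_A)\,\square\,(C,\pi_C)$, then $(B,\pi_B)\equiv(C,\pi_C)$.
   Context: A signed graph $(G,\sigma)$ is a simple loopless undirected graph with a signature $\sigma:E(G)\to\{+1,-1\}$. Switching a vertex negates the signs of its incident edges. Two signed graphs are equivalent ($\equiv$) if there is a graph isomorphism between them carrying one signature to a signature obtained from the other by switching a set of vertices. The Cartesian product $(G,\sigma)\,\square\,(H,\pi)$ is the signed graph on $G\,\square\,H$ where $(u,v_1)(u,v_2)$ has sign $\pi(v_1v_2)$ and $(u_1,v)(u_2,v)$ has sign $\sigma(u_1u_2)$. *)

From mathcomp Require Import all_boot.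
Set Implicit Arguments. Unset Strict Implicit. Unset Printing Implicit Defensive.

(* Signs are booleans:
   [false] = +1, [true] = -1.  The signature is stored as a symmetric
   function on ordered pairs; only its values on edges matter. *)
Record sgraph := SGraph {
  sv :> finType;
  sadj : rel sv;
  ssgn : sv -> sv -> bool;
  sadj_sym : forall x y, sadj x y = sadj y x;
  sadj_irr : forall x, sadj x x = false;
  ssgn_sym : forall x y, ssgn x y = ssgn y x
}.

Definition sg_equiv (G H : sgraph) : Prop :=
  exists f : G -> H, bijective f /\
    (forall x y, @sadj H (f x) (f y) = @sadj G x y) /\
    exists U : {set G}, forall x y, @sadj G x y ->
      @ssgn H (f x) (f y) = @ssgn G x y (+) (x \in U) (+) (y \in U).

Section Prod.
Variables G H : sgraph.
Definition cp_adj : rel (G * H)%type := fun p q =>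
  ((p.1 == q.1) && @sadj H p.2 q.2) || ((p.2 == q.2) && @sadj G p.1 q.1).
Definition cp_sgn (p q : G * H) : bool :=
  if p.1 == q.1 then @ssgn H p.2 q.2 else @ssgn G p.1 q.1.
Lemma cp_adj_sym p q : cp_adj p q = cp_adj q p.
Proof. by rewrite /cp_adj eq_sym (@sadj_sym H) (eq_sym p.2) (@sadj_sym G). Qed.
Lemma cp_adj_irr p : cp_adj p p = false.
Proof. by rewrite /cp_adj (@sadj_irr H) (@sadj_irr G) !andbF. Qed.
Lemma cp_sgn_sym p q : cp_sgn p q = cp_sgn q p.
Proof. by rewrite /cp_sgn eq_sym (@ssgn_sym H) (@ssgn_sym G). Qed.
Definition cprod : sgraph := SGraph cp_adj_sym cp_adj_irr cp_sgn_sym.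
End Prod.

From mathcomp Require Import all_boot all_order all_algebra ring.
Set Implicit Arguments. Unset Strict Implicit. Unset Printing Implicit Defensive.
Import GRing.Theory Num.Theory.
Local Open Scope ring_scope.

(* A pattern on a finite vertex set P is a list S of
   edges, each weighted by the signed adjacency entry of its image, and a list
   T of ties, each forcing its ends to have the same image; the weighted count
   of maps P -> G is invariant under switching isomorphism of G as soon as
   every 2-colouring of P constant on the ties cuts S evenly.  The signed
   adjacency matrix of A □ B is M_A ⊗ 1 + 1 ⊗ M_B, so the count for A □ B
   expands over the ways of sending each edge of S to A or to B; the term
   sending every edge to B carries a count of A with no edges, which is
   positive, so induction on |S| shows that B and C have the same invariant
   counts.  Finally, summing over the switchings d of B, the number of pairs
   (d, f) with f : B -> C injective and preserving signed adjacency after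
   switching at d is an integer combination of invariant counts: it is
   positive for C = B, hence also for C, and |B| = |C| makes f bijective. *)

Definition sadjm (G : sgraph) (x y : G) : int :=
  if sadj x y then (-1) ^+ ssgn x y else 0.

Definition hom_weight (G : sgraph) (P : Type) (S T : seq (P * P)) (f : P -> G) : int :=
  \prod_(e <- S) sadjm (f e.1) (f e.2) * \prod_(e <- T) (f e.1 == f e.2)%:R.

Definition hom_count (G : sgraph) (P : finType) (S T : seq (P * P)) : int :=
  \sum_(f : {ffun P -> G}) hom_weight S T f.

Definition cut_parity (P : Type) (c : P -> bool) (S : seq (P * P)) : bool :=
  \big[addb/false]_(e <- S) (c e.1 (+) c e.2).

(* Switching G at U multiplies the weight of f by (-1) ^+ cut_parity c S with
   c x := f x \in U, and the weight vanishes unless c is constant on the ties. *)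
Definition switching_invariant (P : Type) (S T : seq (P * P)) : Prop :=
  forall c : P -> bool, all (fun e => c e.1 == c e.2) T -> ~~ cut_parity c S.

Definition same_invariant_counts (G H : sgraph) : Prop :=
  forall (P : finType) (S T : seq (P * P)),
    switching_invariant S T -> hom_count G S T = hom_count H S T.

Lemma prod_sign_cut (P : Type) (c : P -> bool) (S : seq (P * P)) :
  \prod_(e <- S) (-1) ^+ (c e.1 (+) c e.2) = (-1) ^+ cut_parity c S :> int.
Proof.
by rewrite /cut_parity (big_morph (fun b : bool => (-1) ^+ b : int) (@signr_addb _)
  (erefl : (-1) ^+ false = 1 :> int)).
Qed.

Lemma cut_parity_const (P : Type) (c : P -> bool) (S : seq (P * P)) :
  all (fun e => c e.1 == c e.2) S -> cut_parity c S = false.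
Proof.
rewrite /cut_parity; elim: S => [|e S IH]; rewrite ?big_nil ?big_cons //=.
by case/andP=> /eqP-> /IH->; rewrite addbb.
Qed.

Lemma eq_cut_parity (P : Type) (c d : P -> bool) (S : seq (P * P)) :
  c =1 d -> cut_parity c S = cut_parity d S.
Proof. by move=> cd; apply: eq_bigr => e _; rewrite !cd. Qed.

Lemma cut_parity_cat (P : Type) (c : P -> bool) (S1 S2 : seq (P * P)) :
  cut_parity c (S1 ++ S2) = cut_parity c S1 (+) cut_parity c S2.
Proof. exact: big_cat. Qed.

Lemma cut_parity_addb (P : Type) (c d : P -> bool) (S : seq (P * P)) :
  cut_parity (fun x => c x (+) d x) S = cut_parity c S (+) cut_parity d S.
Proof. by rewrite /cut_parity -big_split; apply: eq_bigr => e _; rewrite addbACA. Qed.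

Lemma hom_count_nil (G : sgraph) (P : finType) :
  hom_count G (P := P) [::] [::] = (#|G| ^ #|P|)%:R.
Proof.
rewrite /hom_count /hom_weight.
under eq_bigr do rewrite !big_nil mulr1.
by rewrite sumr_const card_ffun.
Qed.

Lemma sg_equiv_same_invariant_counts (G H : sgraph) :
  sg_equiv G H -> same_invariant_counts G H.
Proof.
case=> f [[g fK gK] [adj_f [U sgn_f]]] P S T invST.
rewrite /hom_count (reindex (fun phi : {ffun P -> G} => [ffun x => f (phi x)])); last first.
  exists (fun psi : {ffun P -> H} => [ffun x => g (psi x)]) => phi _;
  by apply/ffunP => x; rewrite !ffunE ?fK ?gK.
apply: eq_bigr => phi _; apply/esym; rewrite /hom_weight.
have switch x y : sadjm (f x) (f y) = (-1) ^+ ((x \in U) (+) (y \in U)) * sadjm x y.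
  rewrite /sadjm adj_f; case: ifP => [/sgn_f -> | _]; last by rewrite mulr0.
  by rewrite -addbA signr_addb mulrC.
under eq_bigr do rewrite !ffunE switch.
under [X in _ * X]eq_bigr do rewrite !ffunE (inj_eq (can_inj fK)).
rewrite big_split /= (prod_sign_cut (fun x => phi x \in U)).
have [tied | /allPn[e eT /negbTE untied]] := boolP (all (fun e => phi e.1 == phi e.2) T).
  rewrite (negbTE (invST _ _)) ?mul1r //.
  by apply/allP=> e /(allP tied) /eqP->.
suff ->: \prod_(e <- T) (phi e.1 == phi e.2)%:R = 0 :> int by rewrite !mulr0.
by apply/eqP; rewrite prodf_seq_eq0; apply/hasP; exists e; rewrite ?untied.
Qed.

Definition sub_at (I : Type) (s : seq I) (J : {set 'I_(size s)}) : seq I :=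
  [seq tnth (in_tuple s) i | i in J].

Lemma size_sub_at (I : Type) (s : seq I) (J : {set 'I_(size s)}) :
  size (sub_at J) = #|J|.
Proof. exact: size_image. Qed.

Lemma sub_at0 (I : Type) (s : seq I) : sub_at (set0 : {set 'I_(size s)}) = [::].
Proof. by rewrite /sub_at /image_mem enum_set0. Qed.

Lemma sub_atT (I : Type) (s : seq I) : sub_at [set: 'I_(size s)] = s.
Proof. by rewrite /sub_at /image_mem enum_setT -enumT map_tnth_enum. Qed.

Lemma big_sub_atC (R : Type) (idx : R) (op : Monoid.com_law idx) (I : Type)
    (s : seq I) (J : {set 'I_(size s)}) (F : I -> R) :
  \big[op/idx]_(x <- s) F x =
  op (\big[op/idx]_(x <- sub_at J) F x) (\big[op/idx]_(x <- sub_at (~: J)) F x).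
Proof.
rewrite !big_image big_tnth (bigID [in J]) /=.
by congr (op _ _); apply: eq_bigl => i; rewrite !inE.
Qed.

Lemma cut_parity_sub_at (P : Type) (c : P -> bool) (S : seq (P * P))
    (J : {set 'I_(size S)}) :
  cut_parity c S = cut_parity c (sub_at J) (+) cut_parity c (sub_at (~: J)).
Proof. exact: big_sub_atC. Qed.

Lemma prodrD_sub_at (R : comPzSemiRingType) (I : Type) (s : seq I) (F G : I -> R) :
  \prod_(x <- s) (F x + G x) =
  \sum_(J : {set 'I_(size s)})
    \prod_(x <- sub_at J) F x * \prod_(x <- sub_at (~: J)) G x.
Proof.
rewrite big_tnth bigA_distr; apply: eq_bigr => J _.
rewrite !big_image (bigID [in J]) /=.
congr (_ * _); apply: eq_big => [i | i Ji]; rewrite ?inE //.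
  by rewrite Ji.
by rewrite (negbTE Ji).
Qed.

Lemma big_ffun_pair (R : Type) (idx : R) (op : Monoid.com_law idx) (P A B : finType)
    (F : {ffun P -> A * B} -> R) :
  \big[op/idx]_(f : {ffun P -> A * B}) F f =
  \big[op/idx]_(f1 : {ffun P -> A}) \big[op/idx]_(f2 : {ffun P -> B})
     F [ffun x => (f1 x, f2 x)].
Proof.
rewrite pair_big (reindex (fun f12 : {ffun P -> A} * {ffun P -> B} =>
  [ffun x => (f12.1 x, f12.2 x)])) //.
exists (fun f : {ffun P -> A * B} => ([ffun x => (f x).1], [ffun x => (f x).2])).
  by move=> [f1 f2] _; congr pair; apply/ffunP => x; rewrite !ffunE.
by move=> f _; apply/ffunP => x; rewrite !ffunE; case: (f x).
Qed.

Lemma natr_eq_pair (R : pzSemiRingType) (T1 T2 : eqType) (p q : T1 * T2) :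
  (p == q)%:R = (p.1 == q.1)%:R * (p.2 == q.2)%:R :> R.
Proof. by case: p q => [a b] [a' b']; rewrite xpair_eqE -natrM mulnb. Qed.

Lemma sadjm_cprod (A B : sgraph) (p q : cprod A B) :
  sadjm p q = sadjm p.1 q.1 * (p.2 == q.2)%:R + (p.1 == q.1)%:R * sadjm p.2 q.2.
Proof.
case: p q => [a b] [a' b']; rewrite /sadjm /= /cp_adj /cp_sgn /=.
have [<- | ne_a] /= := eqVneq a a'.
  by rewrite sadj_irr andbF orbF mul0r add0r mul1r.
by case: (b == b'); rewrite ?mulr1 ?mulr0 mul0r addr0.
Qed.

Lemma hom_weight_cprod (A B : sgraph) (P : finType) (S T : seq (P * P))
    (f1 : P -> A) (f2 : P -> B) :
  hom_weight (G := cprod A B) S T [ffun x => (f1 x, f2 x)] =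
  \sum_(J : {set 'I_(size S)})
    hom_weight (sub_at J) (sub_at (~: J) ++ T) f1 *
    hom_weight (sub_at (~: J)) (sub_at J ++ T) f2.
Proof.
rewrite /hom_weight.
under eq_bigr do rewrite !ffunE sadjm_cprod /=.
under [X in _ * X]eq_bigr do rewrite !ffunE natr_eq_pair /=.
rewrite prodrD_sub_at big_split /= mulr_suml; apply: eq_bigr => J _.
by rewrite !big_cat !big_split /=; ring.
Qed.

Lemma hom_count_cprod (A B : sgraph) (P : finType) (S T : seq (P * P)) :
  hom_count (cprod A B) S T =
  \sum_(J : {set 'I_(size S)})
    hom_count A (sub_at J) (sub_at (~: J) ++ T) *
    hom_count B (sub_at (~: J)) (sub_at J ++ T).
Proof.
rewrite /hom_count big_ffun_pair.
under eq_bigr => f1 _ do under eq_bigr => f2 _ do rewrite hom_weight_cprod.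
under eq_bigr do rewrite exchange_big /=.
rewrite exchange_big; apply: eq_bigr => J _.
by rewrite mulr_suml; apply: eq_bigr => f1 _; rewrite mulr_sumr.
Qed.

Lemma hom_count_edgeless_gt0 (G : sgraph) (P : finType) (T : seq (P * P)) :
  (0 < #|G|)%N -> 0 < hom_count G [::] T.
Proof.
case/card_gt0P=> g _; rewrite /hom_count (bigD1 [ffun=> g]) //=.
apply: ltr_pwDl; last apply: sumr_ge0.
  by rewrite /hom_weight big_nil mul1r big1 ?ltr01 // => e _; rewrite !ffunE eqxx.
by move=> f _; rewrite /hom_weight big_nil mul1r prodr_ge0.
Qed.

Lemma switching_invariant_sub_at (P : Type) (S T : seq (P * P))
    (J : {set 'I_(size S)}) :
  switching_invariant S T -> switching_invariant (sub_at (~: J)) (sub_at J ++ T).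
Proof.
move=> invST c; rewrite all_cat => /andP[cJ cT].
by have := invST c cT; rewrite (cut_parity_sub_at c J) cut_parity_const.
Qed.

Lemma same_invariant_counts_cancel (A B C : sgraph) :
  (0 < #|A|)%N -> same_invariant_counts (cprod A B) (cprod A C) ->
  same_invariant_counts B C.
Proof.
move=> A_gt0 ABC P S T; have [n] := ubnP (size S).
elim: n S T => // n IH S T /ltnSE S_le invST.
have IH_J (J : {set 'I_(size S)}) : J != set0 ->
    hom_count B (sub_at (~: J)) (sub_at J ++ T) =
    hom_count C (sub_at (~: J)) (sub_at J ++ T).
  move=> J_neq0; apply: IH; last exact: switching_invariant_sub_at.
  apply: (leq_trans _ S_le); rewrite size_sub_at -[X in (_ < X)%N]card_ord.
  by rewrite -(cardsC J) -{1}[#|~: J|]add0n ltn_add2r card_gt0.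
have := ABC P S T invST.
rewrite !hom_count_cprod (bigD1 set0) // [X in _ = X](bigD1 set0) //=.
under eq_bigr => J J_neq0 do rewrite IH_J //.
move/addIr; rewrite sub_at0 setC0 sub_atT /=; apply: mulfI.
by rewrite lt0r_neq0 // hom_count_edgeless_gt0.
Qed.

(* Integer combinations of patterns (Lovász's quantum graphs).  They are
   evaluated at a map f together with a switching d of the pattern vertices;
   summing over d kills every pattern that is not switching invariant. *)
Record qterm (P : Type) :=
  QTerm { qcoef : int; qedges : seq (P * P); qties : seq (P * P) }.

Definition qeval (G : sgraph) (P : Type) (d : P -> bool) (f : P -> G)
    (Q : seq (qterm P)) : int :=
  \sum_(q <- Q)
    qcoef q * (-1) ^+ cut_parity d (qedges q) * hom_weight (qedges q) (qties q) f.

Definition qmul (P : Type) (Q1 Q2 : seq (qterm P)) : seq (qterm P) :=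
  [seq QTerm (qcoef q1 * qcoef q2) (qedges q1 ++ qedges q2) (qties q1 ++ qties q2)
  | q1 <- Q1, q2 <- Q2].

Definition qone (P : Type) : seq (qterm P) := [:: QTerm 1 [::] [::]].

Lemma qeval_mul (G : sgraph) (P : Type) (d : P -> bool) (f : P -> G) :
  {morph qeval d f : Q1 Q2 / qmul Q1 Q2 >-> Q1 * Q2}.
Proof.
move=> Q1 Q2; rewrite /qeval /qmul big_allpairs_dep mulr_suml.
apply: eq_bigr => q1 _; rewrite mulr_sumr; apply: eq_bigr => q2 _ /=.
by rewrite cut_parity_cat signr_addb /hom_weight !big_cat /=; ring.
Qed.

Lemma qeval_one (G : sgraph) (P : Type) (d : P -> bool) (f : P -> G) :
  qeval d f (qone P) = 1.
Proof. by rewrite /qeval /cut_parity /hom_weight big_seq1 /= !big_nil expr0 !mulr1. Qed.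

Lemma sum_sign_cut_parity (P : finType) (S : seq (P * P)) (c : P -> bool) :
  cut_parity c S -> \sum_(d : {ffun P -> bool}) (-1) ^+ cut_parity d S = 0 :> int.
Proof.
move=> odd_c; apply/eqP; rewrite -eqNr -sumrN.
pose flip (d : {ffun P -> bool}) := [ffun x => d x (+) c x].
have flipK : involutive flip by move=> d; apply/ffunP => x; rewrite !ffunE addbK.
rewrite [X in _ == X](reindex_inj (inv_inj flipK)); apply/eqP/eq_bigr => d _.
rewrite (@eq_cut_parity _ (flip d) (fun x => d x (+) c x)) => [|x]; last by rewrite ffunE.
by rewrite cut_parity_addb odd_c addbT signrN.
Qed.

Lemma sum_qeval (G : sgraph) (P : finType) (Q : seq (qterm P)) :
  \sum_(d : {ffun P -> bool}) \sum_(f : {ffun P -> G}) qeval d f Q =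
  \sum_(q <- Q)
    qcoef q * (\sum_(d : {ffun P -> bool}) (-1) ^+ cut_parity d (qedges q)) *
    hom_count G (qedges q) (qties q).
Proof.
rewrite exchange_big /qeval; under eq_bigr do rewrite exchange_big /=.
rewrite exchange_big; apply: eq_bigr => q _.
rewrite /hom_count mulr_sumr; apply: eq_bigr => f _.
by rewrite mulr_sumr mulr_suml.
Qed.

Lemma same_invariant_counts_sum_qeval (G H : sgraph) (P : finType)
    (Q : seq (qterm P)) :
  same_invariant_counts G H ->
  \sum_(d : {ffun P -> bool}) \sum_(f : {ffun P -> G}) qeval d f Q =
  \sum_(d : {ffun P -> bool}) \sum_(f : {ffun P -> H}) qeval d f Q.
Proof.
move=> GH; rewrite !sum_qeval; apply: eq_bigr => q _.
have [/existsP[c odd_c] | /existsPn even] :=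
  boolP [exists c : {ffun P -> bool}, cut_parity c (qedges q)].
  by rewrite (sum_sign_cut_parity odd_c) mulr0 !mul0r.
rewrite GH // => c _; rewrite (@eq_cut_parity _ c [ffun x => c x]) ?even // => x.
by rewrite ffunE.
Qed.

Definition preserves_pair (G H : sgraph) (d : G -> bool) (f : G -> H) (x y : G) : bool :=
  ((-1) ^+ (d x (+) d y) * sadjm (f x) (f y) == sadjm x y) && (f x != f y).

(* With z := (-1) ^+ (d x (+) d y) * sadjm (f x) (f y) and m := sadjm x y,
   both in {0, 1, -1}, the first factor evaluates to 2 - 2 z^2 or z^2 + m z,
   i.e. to 2 [z = m]; the second one to 1 - [f x = f y]. *)
Definition qpreserves_pair (G : sgraph) (x y : G) : seq (qterm G) :=
  qmul (if sadjm x y == 0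
        then [:: QTerm 2 [::] [::]; QTerm (-2) [:: (x, y); (x, y)] [::]]
        else [:: QTerm 1 [:: (x, y); (x, y)] [::]; QTerm (sadjm x y) [:: (x, y)] [::]])
       [:: QTerm 1 [::] [::]; QTerm (-1) [::] [:: (x, y)]].

Lemma signr_sadjm_in (G : sgraph) (s : bool) (x y : G) :
  (-1) ^+ s * sadjm x y \in [:: 0; 1; -1].
Proof. by rewrite /sadjm; case: (sadj x y); case: s; case: (ssgn x y). Qed.

Lemma trit_eq_poly (z m : int) : z \in [:: 0; 1; -1] -> m \in [:: 0; 1; -1] ->
  (if m == 0 then 2 - 2 * z ^+ 2 else z ^+ 2 + m * z) = (z == m)%:R *+ 2.
Proof. by rewrite !inE => /or3P[] /eqP-> /or3P[] /eqP->. Qed.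

Lemma qeval_qpreserves_pair (G H : sgraph) (d : G -> bool) (f : G -> H) (x y : G) :
  qeval d f (qpreserves_pair x y) = (preserves_pair d f x y)%:R *+ 2.
Proof.
set z := (-1) ^+ (d x (+) d y) * sadjm (f x) (f y).
have z2 : z ^+ 2 = sadjm (f x) (f y) ^+ 2 by rewrite exprMn sqrr_sign mul1r.
have m_in : sadjm x y \in [:: 0; 1; -1].
  by have := signr_sadjm_in false x y; rewrite expr0 mul1r.
rewrite /qpreserves_pair qeval_mul.
have -> : qeval d f (if sadjm x y == 0
    then [:: QTerm 2 [::] [::]; QTerm (-2) [:: (x, y); (x, y)] [::]]
    else [:: QTerm 1 [:: (x, y); (x, y)] [::]; QTerm (sadjm x y) [:: (x, y)] [::]]) =
    if sadjm x y == 0 then 2 - 2 * z ^+ 2 else z ^+ 2 + sadjm x y * z.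
  rewrite /qeval /cut_parity /hom_weight z2 /z.
  by case: ifP => _; rewrite !big_cons !big_nil /= addbF addbb expr0; ring.
have -> : qeval d f [:: QTerm 1 [::] [::]; QTerm (-1) [::] [:: (x, y)]] =
    1 - (f x == f y)%:R.
  by rewrite /qeval /cut_parity /hom_weight !big_cons !big_nil /= expr0; ring.
rewrite trit_eq_poly ?signr_sadjm_in // /preserves_pair -/z.
by case: (f x == f y); rewrite ?subrr ?subr0 ?mulr0 ?mulr1 ?andbF ?andbT.
Qed.

Definition switching_embedding_count (G H : sgraph) : int :=
  \sum_(d : {ffun G -> bool}) \sum_(f : {ffun G -> H})
    \prod_(p : G * G | p.1 != p.2) ((preserves_pair d f p.1 p.2)%:R *+ 2).

Lemma switching_embedding_count_qeval (G H : sgraph) :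
  switching_embedding_count G H =
  \sum_(d : {ffun G -> bool}) \sum_(f : {ffun G -> H})
    qeval d f (\big[@qmul G/qone G]_(p : G * G | p.1 != p.2) qpreserves_pair p.1 p.2).
Proof.
apply: eq_bigr => d _; apply: eq_bigr => f _.
rewrite (big_morph _ (qeval_mul d f) (qeval_one d f)).
by apply: eq_bigr => p _; rewrite qeval_qpreserves_pair.
Qed.

Lemma switching_embedding_term_ge0 (G H : sgraph) (d : G -> bool) (f : G -> H) :
  0 <= \prod_(p : G * G | p.1 != p.2) ((preserves_pair d f p.1 p.2)%:R *+ 2) :> int.
Proof. by apply: prodr_ge0 => p _; rewrite mulrn_wge0. Qed.

Lemma switching_embedding_count_self_gt0 (G : sgraph) :
  0 < switching_embedding_count G G.
Proof.
rewrite /switching_embedding_count (bigD1 [ffun=> false]) //=.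
apply: ltr_pwDl; last first.
  by apply: sumr_ge0 => d _; apply: sumr_ge0 => f _; apply: switching_embedding_term_ge0.
rewrite (bigD1 [ffun x => x]) //=; apply: ltr_pwDl.
  by apply: prodr_gt0 => p neq_p; rewrite /preserves_pair !ffunE neq_p expr0 mul1r eqxx.
by apply: sumr_ge0 => f _; apply: switching_embedding_term_ge0.
Qed.

Lemma switching_embedding_count_neq0 (G H : sgraph) :
  switching_embedding_count G H != 0 ->
  exists d : G -> bool, exists f : G -> H,
    forall x y, x != y -> preserves_pair d f x y.
Proof.
rewrite psumr_neq0; last first.
  by move=> d _; apply: sumr_ge0 => f _; apply: switching_embedding_term_ge0.
case/hasP=> d _ /= /lt0r_neq0.
rewrite psumr_neq0 => [|f _]; last exact: switching_embedding_term_ge0.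
case/hasP=> f _ /= /lt0r_neq0 /prodf_neq0 no_zero; exists d, f => x y neq_xy.
by have := no_zero (x, y) neq_xy; case: (preserves_pair d f x y); rewrite ?mul0rn ?eqxx.
Qed.

Lemma signr_sadjm_eq (G H : sgraph) (s : bool) (u v : H) (x y : G) :
  (-1) ^+ s * sadjm u v = sadjm x y ->
  sadj u v = sadj x y /\ (sadj x y -> ssgn u v = ssgn x y (+) s).
Proof.
rewrite /sadjm; case: (sadj u v); case: (sadj x y) => //=.
- by rewrite -signr_addb => /signr_inj <-; rewrite addbAC addbb.
- by move/eqP; rewrite -signr_addb signr_eq0.
- by rewrite mulr0 => /eqP; rewrite eq_sym signr_eq0.
Qed.

Lemma preserves_pair_sg_equiv (G H : sgraph) (d : G -> bool) (f : G -> H) :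
  #|G| = #|H| -> (forall x y, x != y -> preserves_pair d f x y) -> sg_equiv G H.
Proof.
move=> card_GH pres.
have f_inj : injective f by move=> x y; apply: contra_eq => /pres /andP[].
exists f; split; first exact: inj_card_bij f_inj (eq_leq (esym card_GH)).
have f_eq x y : x != y -> sadj (f x) (f y) = sadj x y /\
    (sadj x y -> ssgn (f x) (f y) = ssgn x y (+) (d x (+) d y)).
  by move/pres/andP=> [/eqP/signr_sadjm_eq].
split=> [x y | ].
  by have [<- | /f_eq[] //] := eqVneq x y; rewrite !sadj_irr.
exists [set x | d x] => x y adj_xy; rewrite !inE -addbA.
have neq_xy : x != y by apply: contraTneq adj_xy => ->; rewrite sadj_irr.
by case: (f_eq x y neq_xy) => _ ->.
Qed.

Lemma same_invariant_counts_card (G H : sgraph) :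
  same_invariant_counts G H -> #|G| = #|H|.
Proof.
have inv0 : switching_invariant (P := unit) [::] [::].
  by move=> c _; rewrite /cut_parity big_nil.
move/(_ _ _ _ inv0); rewrite !hom_count_nil card_unit !expn1.
by move/eqP; rewrite eqr_nat => /eqP.
Qed.

Lemma same_invariant_counts_sg_equiv (G H : sgraph) :
  same_invariant_counts G H -> sg_equiv G H.
Proof.
move=> GH; have : switching_embedding_count G H != 0.
  rewrite switching_embedding_count_qeval -(same_invariant_counts_sum_qeval _ GH).
  by rewrite -switching_embedding_count_qeval lt0r_neq0 ?switching_embedding_count_self_gt0.
case/switching_embedding_count_neq0=> d [f pres].
exact: preserves_pair_sg_equiv (same_invariant_counts_card GH) pres.
Qed.

Local Close Scope ring_scope.

Theorem theorem4p11 (A B C : sgraph) :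
  0 < #|A| ->
  sg_equiv (cprod A B) (cprod A C) -> sg_equiv B C.
Proof.
move=> A_gt0 /sg_equiv_same_invariant_counts ABC.
exact/same_invariant_counts_sg_equiv/(same_invariant_counts_cancel A_gt0 ABC).
Qed.
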